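(* Let $G=(V,E)$ be a temporal graph, $s\in V$, $t_s\in\mathbb{R}$, and let $T$ be either the DFS tree produced by DFS-v1 or the BFS tree produced by temporal BFS, on $G$ from $s$ with starting time $t_s$. For a vertex $v\neq s$, let $O(v)$ be the set of occurrences of $v$ in $T$. If $O(v)\neq\emptyset$, let $v_{\min}\in O(v)$ have minimal time value $\sigma$ among the occurrences in $O(v)$; then the sequence of tree edges on the path from the root to $v_{\min}$ in $T$ is a foremost path from $s$ to $v$, i.e. it is a temporal path from $s$ to $v$ starting at or after $t_s$ and its end time $t_{end}$ is at most $t_{end}(P')$ for every temporal path $P'$ from $s$ to $v$ starting at or after $t_s$. If $O(v)=\emptyset$, then there is no temporal path from $s$ to $v$ starting at or after $t_s$.
   Context: A temporal graph is a pair $G=(V,E)$ where $V$ is a finite set of vertices and $E$ is a finite set of temporal edges, i.e. triples $(u,v,t)$ with $u,v\in V$, $u\neq v$, $t\in\mathbb{R}$ (the time at which the edge is active); distinct elements of $E$ are distinct triples. A temporal path from $x$ to $y$ (starting at or after $t_s$) is a sequence $P=\langle (w_1,w_2,t_1),\dots,(w_k,w_{k+1},t_k)\rangle$ of $k\ge1$ edges of $E$ with $w_1=x$, $w_{k+1}=y$ and $t_s\le t_1\le t_2\le\dots\le t_k$; $t_{start}(P)=t_1$, $t_{end}(P)=t_k$. Temporal DFS-v1. The procedure maintains a value $\sigma(x)\in\mathbb{R}\cup\{\infty\}$ for every $x\in V$, initially $\infty$, and a set of already traversed edges, initially empty, and builds a rooted tree $T$ whose nodes are occurrences of vertices of $G$.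 Each occurrence carries a time value $\sigma$, namely the value assigned to $\sigma(x)$ when that occurrence was created. Start: create the root occurrence of $s$, set $\sigma(s)=t_s$, and make it current. Step (a): let $u$ be the vertex of the current occurrence, $\sigma_u$ its time value, and $A$ the set of edges $(u,v,t)\in E$ not yet traversed with $\sigma_u\le t$. If $A=\emptyset$: if the current occurrence is the root, terminate; otherwise make its parent current and repeat step (a). If $A\neq\emptyset$, choose any vertex $v$ such that $A$ contains an edge to $v$, select the edge $e=(u,v,t)$ of $A$ to $v$ with smallest $t$, mark it traversed and go to step (b). Step (b): if the current value $\sigma(v)>t$, create a new occurrence of $v$ as a child of the current occurrence joined by the tree edge $e$, set $\sigma(v):=t$ (its time value), make it current and go to (a); otherwise go to (a) with the same current occurrence. Temporal BFS. Records are tuples $(x,d,\tau,p)$ (vertex $x$, level $d$, time $\tau$, predecessor record $p$ or none); every record ever created is an occurrence (node) of the BFS tree $T$, rooted at the initial record, with a tree edge from the predecessor record to the record; the level and time of an occurrence are the final values of its fields. For each $x\in V$ a current value $\sigma(x)$ is kept, initially $\infty$, and set to $\tau$ whenever a record of $x$ is created or its time is updated to $\tau$. Initially the FIFO queue $Q$ contains only $(s,0,t_s,\text{none})$ and $\sigma(s)=t_s$; no edge is traversed. While $Q\neq\emptyset$: pop the front record $R=(u,d_u,\sigma_u,p_u)$; let $B$ be the set of edges $(u,v,t)\in E$ not yet traversed with $\sigma_u\le t$; for each vertex $v$ such that $B$ contains an edge to $v$ (in any order), let $e=(u,v,t)$ be the edge of $B$ to $v$ with smallest $t$, mark $e$ traversed,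 and: (i) if $Q$ contains no record of $v$ and $\sigma(v)>t$, create $(v,d_u+1,t,R)$ and append it to $Q$; (ii) if $Q$ contains a record of $v$ with level $d_u+1$ and $\sigma(v)>t$, set that record's time to $t$ and predecessor to $R$; (iii) if $Q$ contains a record of $v$ but none with level $d_u+1$, and $\sigma(v)>t$, create $(v,d_u+1,t,R)$ and append it to $Q$. *)

From Stdlib Require Import Reals List Relations.
Import ListNotations.
Open Scope R_scope.

Definition edge (V : Type) : Type := (V * V * R)%type.

Section TemporalGraphs.
Context {V : Type}.

Definition esrc (e : edge V) : V := fst (fst e).
Definition etgt (e : edge V) : V := snd (fst e).
Definition etime (e : edge V) : R := snd e.

Definition temporal_graph (E : list (edge V)) : Prop :=
  NoDup E /\ forall e, In e E -> esrc e <> etgt e.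

Inductive tpath (E : list (edge V)) : V -> R -> list (edge V) -> V -> Prop :=
| tpath_one x y t t0 :
    In (x, y, t) E -> t0 <= t -> tpath E x t0 [(x, y, t)] y
| tpath_cons x w y t t0 P :
    In (x, w, t) E -> t0 <= t -> tpath E w t P y ->
    tpath E x t0 ((x, w, t) :: P) y.

Definition temporal_path (E : list (edge V)) (x y : V) (ts : R)
  (P : list (edge V)) : Prop := tpath E x ts P y.

Definition t_end (P : list (edge V)) : R :=
  match rev P with e :: _ => etime e | [] => 0 end.

Definition foremost_path (E : list (edge V)) (x y : V) (ts : R)
  (P : list (edge V)) : Prop :=
  temporal_path E x y ts P /\
  forall P', temporal_path E x y ts P' -> t_end P <= t_end P'.

(** Occurrences (tree nodes): vertex, time value, and (parent index, tree edge)
    or None for the root. A tree is the list of all occurrences ever created. *)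
Record occ := mkOcc { ovtx : V; otime : R; oparent : option (nat * edge V) }.

Inductive root_path (T : list occ) : nat -> list (edge V) -> Prop :=
| rp_root i o :
    nth_error T i = Some o -> oparent o = None -> root_path T i []
| rp_step i o p e P :
    nth_error T i = Some o -> oparent o = Some (p, e) ->
    root_path T p P -> root_path T i (P ++ [e]).

(** Values in R ∪ {∞}: None = ∞.  [gt_ext x t] means x > t. *)
Definition gt_ext (x : option R) (t : R) : Prop :=
  match x with None => True | Some y => t < y end.

Definition upd_spec (f f' : V -> option R) (v : V) (t : R) : Prop :=
  f' v = Some t /\ forall x, x <> v -> f' x = f x.

Record dfs_state := mkDfs {
  d_sigma : V -> option R;
  d_trav  : list (edge V);
  d_occs  : list occ;
  d_cur   : nat }.

Definition in_A (E : list (edge V)) (st : dfs_state) (u : V) (su : R)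
  (e : edge V) : Prop :=
  In e E /\ ~ In e (d_trav st) /\ esrc e = u /\ su <= etime e.

Inductive dfs_step (E : list (edge V)) : dfs_state -> dfs_state -> Prop :=
| dfs_back st o p e0 :
    nth_error (d_occs st) (d_cur st) = Some o ->
    (forall e, ~ in_A E st (ovtx o) (otime o) e) ->
    oparent o = Some (p, e0) ->
    dfs_step E st (mkDfs (d_sigma st) (d_trav st) (d_occs st) p)
| dfs_adv_new st o v t sig' :
    nth_error (d_occs st) (d_cur st) = Some o ->
    in_A E st (ovtx o) (otime o) (ovtx o, v, t) ->
    (forall t', in_A E st (ovtx o) (otime o) (ovtx o, v, t') -> t <= t') ->
    gt_ext (d_sigma st v) t ->
    upd_spec (d_sigma st) sig' v t ->
    dfs_step E st
      (mkDfs sig' ((ovtx o, v, t) :: d_trav st)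
         (d_occs st ++ [mkOcc v t (Some (d_cur st, (ovtx o, v, t)))])
         (length (d_occs st)))
| dfs_adv_old st o v t :
    nth_error (d_occs st) (d_cur st) = Some o ->
    in_A E st (ovtx o) (otime o) (ovtx o, v, t) ->
    (forall t', in_A E st (ovtx o) (otime o) (ovtx o, v, t') -> t <= t') ->
    ~ gt_ext (d_sigma st v) t ->
    dfs_step E st
      (mkDfs (d_sigma st) ((ovtx o, v, t) :: d_trav st) (d_occs st) (d_cur st)).

Definition dfs_init (s : V) (ts : R) (st : dfs_state) : Prop :=
  upd_spec (fun _ => None) (d_sigma st) s ts /\ d_trav st = [] /\
  d_occs st = [mkOcc s ts None] /\ d_cur st = 0%nat.

Definition dfs_terminal (E : list (edge V)) (st : dfs_state) : Prop :=
  exists o, nth_error (d_occs st) (d_cur st) = Some o /\ oparent o = None /\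
            forall e, ~ in_A E st (ovtx o) (otime o) e.

Definition dfs_tree (E : list (edge V)) (s : V) (ts : R) (T : list occ) : Prop :=
  exists st0 st, dfs_init s ts st0 /\ clos_refl_trans _ (dfs_step E) st0 st /\
                 dfs_terminal E st /\ d_occs st = T.

(** Records: (occurrence, level).  The queue holds record indices.
    b_cur = Some (r, snap, done): record r has been popped, snap is the set of
    traversed edges at pop time (so B is computed at pop time), done is the
    list of target vertices already handled in this pop. *)
Record bfs_state := mkBfs {
  b_sigma : V -> option R;
  b_trav  : list (edge V);
  b_recs  : list (occ * nat);
  b_queue : list nat;
  b_cur   : option (nat * list (edge V) * list V) }.

Definition in_B (E : list (edge V)) (snap : list (edge V)) (u : V) (su : R)
  (e : edge V) : Prop :=
  In e E /\ ~ In e snap /\ esrc e = u /\ su <= etime e.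

Definition inQ_lvl (st : bfs_state) (v : V) (d : nat) (i : nat) : Prop :=
  In i (b_queue st) /\
  exists o, nth_error (b_recs st) i = Some (o, d) /\ ovtx o = v.

Definition set_nth_list {A : Type} (l : list A) (i : nat) (x : A) : list A :=
  firstn i l ++ [x] ++ skipn (S i) l.

Inductive bfs_step (E : list (edge V)) : bfs_state -> bfs_state -> Prop :=
| bfs_pop st r q :
    b_cur st = None -> b_queue st = r :: q ->
    bfs_step E st (mkBfs (b_sigma st) (b_trav st) (b_recs st) q
                         (Some (r, b_trav st, [])))
| bfs_finish st r snap done o d :
    b_cur st = Some (r, snap, done) ->
    nth_error (b_recs st) r = Some (o, d) ->
    (forall e, in_B E snap (ovtx o) (otime o) e -> In (etgt e) done) ->
    bfs_step E st (mkBfs (b_sigma st) (b_trav st) (b_recs st) (b_queue st) None)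
| bfs_create st r snap done o d v t sig' :
    (* cases (i) and (iii): no record of v with level d+1 in Q *)
    b_cur st = Some (r, snap, done) ->
    nth_error (b_recs st) r = Some (o, d) ->
    ~ In v done ->
    in_B E snap (ovtx o) (otime o) (ovtx o, v, t) ->
    (forall t', in_B E snap (ovtx o) (otime o) (ovtx o, v, t') -> t <= t') ->
    gt_ext (b_sigma st v) t ->
    ~ (exists i, inQ_lvl st v (S d) i) ->
    upd_spec (b_sigma st) sig' v t ->
    bfs_step E st
      (mkBfs sig' ((ovtx o, v, t) :: b_trav st)
         (b_recs st ++ [(mkOcc v t (Some (r, (ovtx o, v, t))), S d)])
         (b_queue st ++ [length (b_recs st)])
         (Some (r, snap, v :: done)))
| bfs_update st r snap done o d v t sig' i :
    b_cur st = Some (r, snap, done) ->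
    nth_error (b_recs st) r = Some (o, d) ->
    ~ In v done ->
    in_B E snap (ovtx o) (otime o) (ovtx o, v, t) ->
    (forall t', in_B E snap (ovtx o) (otime o) (ovtx o, v, t') -> t <= t') ->
    gt_ext (b_sigma st v) t ->
    inQ_lvl st v (S d) i ->
    upd_spec (b_sigma st) sig' v t ->
    bfs_step E st
      (mkBfs sig' ((ovtx o, v, t) :: b_trav st)
         (set_nth_list (b_recs st) i (mkOcc v t (Some (r, (ovtx o, v, t))), S d))
         (b_queue st)
         (Some (r, snap, v :: done)))
| bfs_skip st r snap done o d v t :
    b_cur st = Some (r, snap, done) ->
    nth_error (b_recs st) r = Some (o, d) ->
    ~ In v done ->
    in_B E snap (ovtx o) (otime o) (ovtx o, v, t) ->
    (forall t', in_B E snap (ovtx o) (otime o) (ovtx o, v, t') -> t <= t') ->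
    ~ gt_ext (b_sigma st v) t ->
    bfs_step E st
      (mkBfs (b_sigma st) ((ovtx o, v, t) :: b_trav st) (b_recs st)
         (b_queue st) (Some (r, snap, v :: done))).

Definition bfs_init (s : V) (ts : R) (st : bfs_state) : Prop :=
  upd_spec (fun _ => None) (b_sigma st) s ts /\ b_trav st = [] /\
  b_recs st = [(mkOcc s ts None, 0%nat)] /\ b_queue st = [0%nat] /\
  b_cur st = None.

Definition bfs_terminal (st : bfs_state) : Prop :=
  b_queue st = [] /\ b_cur st = None.

Definition bfs_tree (E : list (edge V)) (s : V) (ts : R) (T : list occ) : Prop :=
  exists st0 st, bfs_init s ts st0 /\ clos_refl_trans _ (bfs_step E) st0 st /\
                 bfs_terminal st /\ map fst (b_recs st) = T.

End TemporalGraphs.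

(** Both procedures maintain a value σ(x) for each vertex and only ever lower
    it, each time creating (or overwriting) an occurrence (x, σ(x)) in the tree.
    The proof isolates what holds on termination, a _foremost certificate_:
    - the tree is well formed: each node hangs below an earlier node by an edge
      of E usable at the parent's time, so root paths are temporal paths from
      s that arrive at the node's time value;
    - σ(s) ≤ ts and every finite σ(x) is the time value of an occurrence of x;
    - σ is closed: an edge (x, y, t) with σ(x) ≤ t yields σ(y) ≤ t.
    Closedness bounds the arrival time of every temporal path from s by σ at
    its endpoint, whence the tree path to a minimal occurrence of v is
    foremost, and a vertex without occurrences is unreachable.
    Closedness is obtained from the local notion of a _settled_ occurrence
    (all its usable edges accounted for by σ): an invariant of each procedure
    shows that every occurrence is settled once it leaves the DFS stack, resp.
    once its BFS record has been scanned, which on termination is all of them. *)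

From Stdlib Require Import Reals List Relations Lia Lra Classical Arith.
Import ListNotations.
Open Scope R_scope.

Lemma nth_snoc_other {A : Type} (l : list A) x j :
  j <> length l -> nth_error (l ++ [x]) j = nth_error l j.
Proof.
  intros Hj. destruct (Nat.lt_ge_cases j (length l)).
  - now apply nth_error_app1.
  - rewrite nth_error_app2 by lia. rewrite (proj2 (nth_error_None l j)) by lia.
    destruct (j - length l)%nat as [| n] eqn:Hn; [lia | destruct n; reflexivity].
Qed.

Lemma nth_snoc_last {A : Type} (l : list A) x : nth_error (l ++ [x]) (length l) = Some x.
Proof. rewrite nth_error_app2, Nat.sub_diag by lia. reflexivity. Qed.

Lemma nth_snoc_old {A : Type} (l : list A) x j y :
  nth_error l j = Some y -> nth_error (l ++ [x]) j = Some y.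
Proof.
  intros Hj. rewrite nth_snoc_other; auto.
  intros ->. rewrite (proj2 (nth_error_None l (length l))) in Hj by lia. discriminate.
Qed.

Lemma nth_set_nth_list {A : Type} (l : list A) i x j : (i < length l)%nat ->
  nth_error (set_nth_list l i x) j = if Nat.eq_dec j i then Some x else nth_error l j.
Proof.
  intros Hi. unfold set_nth_list. rewrite nth_error_app.
  rewrite length_firstn, Nat.min_l by lia. rewrite nth_error_firstn.
  destruct (Nat.eq_dec j i) as [-> | Hne].
  - rewrite Nat.ltb_irrefl, Nat.sub_diag. reflexivity.
  - destruct (Nat.ltb_spec j i); [reflexivity |].
    destruct (j - i)%nat as [| n] eqn:Hn; [lia |]. cbn [app nth_error].
    rewrite nth_error_skipn. f_equal. lia.
Qed.

Lemma nth_set_nth_list_same {A : Type} (l : list A) i x : (i < length l)%nat ->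
  nth_error (set_nth_list l i x) i = Some x.
Proof. intros Hi. rewrite nth_set_nth_list by exact Hi. now destruct Nat.eq_dec. Qed.

Lemma nth_set_nth_list_other {A : Type} (l : list A) i x j : (i < length l)%nat ->
  j <> i -> nth_error (set_nth_list l i x) j = nth_error l j.
Proof. intros Hi Hj. rewrite nth_set_nth_list by exact Hi. now destruct Nat.eq_dec. Qed.

Lemma length_set_nth_list {A : Type} (l : list A) i x : (i < length l)%nat ->
  length (set_nth_list l i x) = length l.
Proof.
  intros Hi. unfold set_nth_list. rewrite !length_app, length_firstn, length_skipn.
  simpl. lia.
Qed.

Lemma map_set_nth_list {A B : Type} (f : A -> B) (l : list A) i x :
  map f (set_nth_list l i x) = set_nth_list (map f l) i (f x).
Proof. unfold set_nth_list. now rewrite !map_app, firstn_map, skipn_map. Qed.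

Section ForemostTrees.
Context {V : Type}.
Variable E : list (edge V).

(** ** Temporal paths *)

Lemma tpath_nonempty x t0 P y : tpath E x t0 P y -> P <> [].
Proof. intros H; inversion H; discriminate. Qed.

Lemma t_end_cons (e : edge V) P : P <> [] -> t_end (e :: P) = t_end P.
Proof.
  intros HP. unfold t_end. simpl. destruct (rev P) eqn:Hr.
  - apply (f_equal (@rev _)) in Hr. rewrite rev_involutive in Hr. now subst.
  - reflexivity.
Qed.

Lemma t_end_snoc (e : edge V) P : t_end (P ++ [e]) = etime e.
Proof. unfold t_end. now rewrite rev_app_distr. Qed.

Lemma tpath_snoc x t0 P y z t :
  tpath E x t0 P y -> In (y, z, t) E -> t_end P <= t ->
  tpath E x t0 (P ++ [(y, z, t)]) z.
Proof.
  induction 1 as [x y t1 t0 Hin Hle | x w y t1 t0 P Hin Hle HP IH];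
    intros HinE Hend; simpl.
  - apply tpath_cons, tpath_one; auto.
  - apply tpath_cons; auto. apply IH; auto.
    rewrite <- (t_end_cons (x, w, t1) P (tpath_nonempty _ _ _ _ HP)). exact Hend.
Qed.

Definition sigma_le (sg : V -> option R) (x : V) (t : R) : Prop :=
  exists b, sg x = Some b /\ b <= t.

Lemma sigma_le_weaken sg x t t' : sigma_le sg x t -> t <= t' -> sigma_le sg x t'.
Proof. intros [b [Hb Hle]] Ht. exists b. split; auto. lra. Qed.

Definition closed_sigma (sg : V -> option R) : Prop :=
  forall e, In e E -> sigma_le sg (esrc e) (etime e) -> sigma_le sg (etgt e) (etime e).

Lemma closed_sigma_bounds_paths sg :
  closed_sigma sg -> forall x t0 P y, tpath E x t0 P y ->
  sigma_le sg x t0 -> sigma_le sg y (t_end P).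
Proof.
  intros Hcl x t0 P y H.
  induction H as [x y t t0 Hin Hle | x w y t t0 P Hin Hle HP IH]; intros Hx.
  - exact (Hcl _ Hin (sigma_le_weaken _ _ _ _ Hx Hle)).
  - rewrite t_end_cons by exact (tpath_nonempty _ _ _ _ HP).
    apply IH, (Hcl _ Hin (sigma_le_weaken _ _ _ _ Hx Hle)).
Qed.

(** ** Trees of occurrences *)

Definition well_formed_tree (s : V) (ts : R) (T : list (@occ V)) : Prop :=
  forall i o, nth_error T i = Some o ->
    (oparent o = None /\ ovtx o = s /\ otime o = ts) \/
    (exists p op, (p < i)%nat /\ nth_error T p = Some op /\
       oparent o = Some (p, (ovtx op, ovtx o, otime o)) /\
       In (ovtx op, ovtx o, otime o) E /\ otime op <= otime o).

Lemma well_formed_parent_lt s ts T j o q e :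
  well_formed_tree s ts T -> nth_error T j = Some o -> oparent o = Some (q, e) ->
  (q < j)%nat.
Proof.
  intros HT Hj Hq. destruct (HT j o Hj) as [[Hr _] | (p & op & Hp & _ & Hpar & _)];
    congruence.
Qed.

Lemma root_path_exists s ts T :
  well_formed_tree s ts T ->
  forall i o, nth_error T i = Some o -> exists P, root_path T i P.
Proof.
  intros HT i. induction i as [i IH] using lt_wf_ind. intros o Ho.
  destruct (HT i o Ho) as [[Hp _] | (p & op & Hlt & Hop & Hp & _)].
  - exists []. eapply rp_root; eauto.
  - destruct (IH p Hlt op Hop) as [P HP]. eexists. eapply rp_step; eauto.
Qed.

Lemma root_path_temporal s ts T :
  well_formed_tree s ts T ->
  forall i P, root_path T i P -> forall o, nth_error T i = Some o ->
  (P = [] /\ ovtx o = s /\ otime o = ts) \/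
  (tpath E s ts P (ovtx o) /\ t_end P = otime o).
Proof.
  intros HT i P H.
  induction H as [i o Ho Hp | i o p e P Ho Hp HP IH]; intros o' Ho';
    rewrite Ho' in Ho; injection Ho as <-.
  - destruct (HT i o' Ho') as [[_ Hroot] | (q & oq & _ & _ & Hq & _)]; [now left | congruence].
  - right. destruct (HT i o' Ho') as [[Hq _] | (q & oq & _ & Hoq & Hq & HinE & Hle)];
      [congruence |].
    rewrite Hp in Hq. injection Hq as -> ->. rewrite t_end_snoc. split; [| reflexivity].
    destruct (IH oq Hoq) as [[-> [Hs Hts]] | [Hpath Hend]].
    + rewrite Hs in HinE |- *. apply tpath_one; auto. lra.
    + apply tpath_snoc; auto. lra.
Qed.

Definition realized (sg : V -> option R) (T : list (@occ V)) : Prop :=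
  forall x a, sg x = Some a ->
    exists j o, nth_error T j = Some o /\ ovtx o = x /\ otime o = a.

Record foremost_certificate (s : V) (ts : R) (T : list (@occ V))
    (sg : V -> option R) : Prop := {
  cert_tree : well_formed_tree s ts T;
  cert_source : sigma_le sg s ts;
  cert_realized : realized sg T;
  cert_closed : closed_sigma sg }.

Lemma certificate_occurrence s ts T sg :
  foremost_certificate s ts T sg ->
  forall y P, tpath E s ts P y ->
  exists j o, nth_error T j = Some o /\ ovtx o = y /\ otime o <= t_end P.
Proof.
  intros [_ Hs HR Hcl] y P HP.
  destruct (closed_sigma_bounds_paths sg Hcl _ _ _ _ HP Hs) as [b [Hb Hle]].
  destruct (HR _ _ Hb) as (j & o & Hj & Hv & Ht). exists j, o. subst. auto.
Qed.

Lemma certificate_minimal_occurrence s ts T sg v :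
  foremost_certificate s ts T sg -> v <> s ->
  forall i o, nth_error T i = Some o -> ovtx o = v ->
  (forall j o', nth_error T j = Some o' -> ovtx o' = v -> otime o <= otime o') ->
  (exists P, root_path T i P) /\
  (forall P, root_path T i P -> foremost_path E s v ts P).
Proof.
  intros Hc Hv i o Ho Hov Hmin. split; [eapply root_path_exists; eauto using cert_tree |].
  intros P HP.
  destruct (root_path_temporal s ts T (cert_tree _ _ _ _ Hc) i P HP o Ho)
    as [[_ [Hs _]] | [Hpath Hend]]; [congruence |].
  rewrite Hov in Hpath. split; [exact Hpath |]. intros P' HP'.
  destruct (certificate_occurrence s ts T sg Hc v P' HP') as (j & o' & Hj & Hj' & Hle).
  specialize (Hmin j o' Hj Hj'). lra.
Qed.

Lemma certificate_no_occurrence s ts T sg v :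
  foremost_certificate s ts T sg ->
  (forall i o, nth_error T i = Some o -> ovtx o <> v) ->
  forall P, ~ temporal_path E s v ts P.
Proof.
  intros Hc Hno P HP.
  destruct (certificate_occurrence s ts T sg Hc v P HP) as (j & o & Hj & Hv & _).
  exact (Hno j o Hj Hv).
Qed.

Definition improves (sg sg' : V -> option R) : Prop :=
  forall x t, sigma_le sg x t -> sigma_le sg' x t.

Lemma improves_refl sg : improves sg sg.
Proof. intros x t H. exact H. Qed.

Lemma lowering_improves (sg sg' : V -> option R) v t :
  upd_spec sg sg' v t -> gt_ext (sg v) t -> improves sg sg' /\ sigma_le sg' v t.
Proof.
  intros [Hv Hother] Hgt. split; [| exists t; split; auto; lra].
  intros x t0 [b [Hb Hle]]. destruct (classic (x = v)) as [-> | Hne].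
  - rewrite Hb in Hgt. exists t. split; auto. simpl in Hgt. lra.
  - exists b. rewrite Hother; auto.
Qed.

Lemma not_lowering_sigma_le (sg : V -> option R) v t :
  ~ gt_ext (sg v) t -> sigma_le sg v t.
Proof.
  unfold gt_ext. intros H. destruct (sg v) as [y |] eqn:Hy.
  - exists y. split; auto. lra.
  - contradiction H. exact I.
Qed.

Definition trav_bounded (sg : V -> option R) (trav : list (edge V)) : Prop :=
  forall e, In e trav -> sigma_le sg (etgt e) (etime e).

Lemma trav_bounded_cons sg sg' trav u v t :
  trav_bounded sg trav -> improves sg sg' -> sigma_le sg' v t ->
  trav_bounded sg' ((u, v, t) :: trav).
Proof. intros Htr Himp Hv e [<- | He]; auto. Qed.

(* An occurrence is settled when all edges usable from it are accounted for
   by σ; this is the local form of closedness. *)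
Definition settled (sg : V -> option R) (o : @occ V) : Prop :=
  forall e, In e E -> esrc e = ovtx o -> otime o <= etime e ->
    sigma_le sg (etgt e) (etime e).

Lemma settled_improves sg sg' o : settled sg o -> improves sg sg' -> settled sg' o.
Proof. intros Hs Himp e He Hsrc Hle. auto. Qed.

Lemma settled_of_traversed sg trav o :
  trav_bounded sg trav ->
  (forall e, In e E -> esrc e = ovtx o -> otime o <= etime e -> In e trav) ->
  settled sg o.
Proof. intros Htr Hall e He Hsrc Hle. auto. Qed.

Lemma closed_of_all_settled sg T :
  realized sg T -> (forall j o, nth_error T j = Some o -> settled sg o) ->
  closed_sigma sg.
Proof.
  intros HR Hall e He [a [Ha Hle]].
  destruct (HR _ _ Ha) as (j & o & Hj & Hx & Ht). apply (Hall j o Hj e He); congruence.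
Qed.

(* Both procedures change the tree at one index k only, by storing a new
   occurrence of v whose parent p precedes k; when no node has k as parent,
   well-formedness is preserved. *)
Lemma well_formed_replace s ts T T' k p op v t :
  well_formed_tree s ts T ->
  (forall j, j <> k -> nth_error T' j = nth_error T j) ->
  nth_error T' k = Some (mkOcc v t (Some (p, (ovtx op, v, t)))) ->
  (forall j o q e, nth_error T j = Some o -> oparent o = Some (q, e) -> q <> k) ->
  (p < k)%nat -> nth_error T p = Some op -> In (ovtx op, v, t) E -> otime op <= t ->
  well_formed_tree s ts T'.
Proof.
  intros HT Hsame Hk Hnp Hpk Hop HinE Hle j o Hj.
  destruct (Nat.eq_dec j k) as [-> | Hne].
  - rewrite Hk in Hj. injection Hj as <-. right. exists p, op.
    rewrite Hsame by lia. simpl. auto.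
  - rewrite Hsame in Hj by exact Hne.
    destruct (HT j o Hj) as [Hroot | (q & oq & Hq & Hoq & Hpar & Hrest)]; [now left | right].
    exists q, oq. rewrite Hsame by exact (Hnp j o q _ Hj Hpar). auto.
Qed.

Lemma realized_replace sg sg' T T' k v t par :
  realized sg T -> upd_spec sg sg' v t ->
  (forall j, j <> k -> nth_error T' j = nth_error T j) ->
  nth_error T' k = Some (mkOcc v t par) ->
  (forall ok, nth_error T k = Some ok -> ovtx ok = v) ->
  realized sg' T'.
Proof.
  intros HR [Hv Hother] Hsame Hk Hold x a Ha.
  destruct (classic (x = v)) as [-> | Hne].
  - rewrite Hv in Ha. injection Ha as <-. exists k, (mkOcc v t par). auto.
  - rewrite Hother in Ha by exact Hne. destruct (HR x a Ha) as (j & o & Hj & Hx & Ht).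
    exists j, o. split; auto. rewrite Hsame; auto.
    intros ->. apply Hne. rewrite <- Hx. auto.
Qed.

Lemma well_formed_snoc s ts T p op v t :
  well_formed_tree s ts T -> nth_error T p = Some op ->
  In (ovtx op, v, t) E -> otime op <= t ->
  well_formed_tree s ts (T ++ [mkOcc v t (Some (p, (ovtx op, v, t)))]).
Proof.
  intros HT Hop HinE Hle.
  assert (Hlt : forall j o, nth_error T j = Some o -> (j < length T)%nat)
    by (intros j o Hj; apply nth_error_Some; congruence).
  eapply well_formed_replace with (k := length T); eauto using nth_snoc_other, nth_snoc_last.
  intros j o q e Hj Hq. pose proof (well_formed_parent_lt _ _ _ _ _ _ _ HT Hj Hq).
  pose proof (Hlt j o Hj). lia.
Qed.

Lemma realized_snoc sg sg' T v t par :
  realized sg T -> upd_spec sg sg' v t -> realized sg' (T ++ [mkOcc v t par]).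
Proof.
  intros HR Hupd. eapply realized_replace; eauto using nth_snoc_other, nth_snoc_last.
  intros ok Hk. rewrite (proj2 (nth_error_None T (length T))) in Hk by lia. discriminate.
Qed.

(** ** Temporal DFS-v1 *)

Section DFS.
Variables (s : V) (ts : R).

Inductive ancestor (T : list (@occ V)) (i : nat) : nat -> Prop :=
| anc_refl : ancestor T i i
| anc_parent j oj p e :
    nth_error T j = Some oj -> oparent oj = Some (p, e) ->
    ancestor T i p -> ancestor T i j.

Lemma ancestor_snoc T x i j : ancestor T i j -> ancestor (T ++ [x]) i j.
Proof.
  induction 1 as [| j oj p e Hj Hp _ IH]; [constructor |].
  eapply anc_parent; eauto using nth_snoc_old.
Qed.

(* The DFS invariant: every occurrence off the stack of ancestors of the
   current occurrence is settled. *)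
Record dfs_inv (st : @dfs_state V) : Prop := {
  dfs_wf : well_formed_tree s ts (d_occs st);
  dfs_source : sigma_le (d_sigma st) s ts;
  dfs_realized : realized (d_sigma st) (d_occs st);
  dfs_trav : trav_bounded (d_sigma st) (d_trav st);
  dfs_stack : forall i o, nth_error (d_occs st) i = Some o ->
    ancestor (d_occs st) i (d_cur st) \/ settled (d_sigma st) o }.

Lemma dfs_settled_exhausted st o :
  trav_bounded (d_sigma st) (d_trav st) ->
  (forall e, ~ in_A E st (ovtx o) (otime o) e) -> settled (d_sigma st) o.
Proof.
  intros Htr HA. apply settled_of_traversed with (d_trav st); auto.
  intros e He Hsrc Hle. apply NNPP. intros Hn. apply (HA e). repeat split; auto.
Qed.

Lemma dfs_inv_init st : dfs_init s ts st -> dfs_inv st.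
Proof.
  intros [[Hs Hother] [Htr [Hocc Hcur]]].
  destruct st as [sg tr occs cur]; simpl in *; subst. constructor; simpl.
  - intros [| [| i]] o Ho; try discriminate. injection Ho as <-. now left.
  - exists ts. split; auto. lra.
  - intros x a Ha. destruct (classic (x = s)) as [-> | Hne].
    + rewrite Hs in Ha. injection Ha as <-. exists 0%nat, (mkOcc s ts None). auto.
    + rewrite Hother in Ha by exact Hne. discriminate.
  - intros e [].
  - intros [| [| i]] o Ho; try discriminate. left. constructor.
Qed.

(* Backtracking: the current occurrence is settled, and the rest of the
   stack consists of ancestors of its parent. *)
Lemma dfs_inv_back st o p e0 :
  nth_error (d_occs st) (d_cur st) = Some o ->
  (forall e, ~ in_A E st (ovtx o) (otime o) e) -> oparent o = Some (p, e0) ->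
  dfs_inv st -> dfs_inv (mkDfs (d_sigma st) (d_trav st) (d_occs st) p).
Proof.
  intros Hcur HA Hpar [Hwf Hs HR Htr Hstack]. constructor; simpl; auto.
  intros i oi Hi. destruct (Hstack i oi Hi) as [Hanc | Hset]; [| now right].
  inversion Hanc as [Hcur_i | j oj q e Hj Hq Hanc' Hj_eq]; subst.
  - right. rewrite Hi in Hcur. injection Hcur as ->. now apply dfs_settled_exhausted.
  - left. rewrite Hcur in Hj. injection Hj as <-. rewrite Hpar in Hq.
    injection Hq as -> ->. exact Hanc'.
Qed.

Lemma dfs_inv_advance_new st o v t sg' :
  nth_error (d_occs st) (d_cur st) = Some o ->
  in_A E st (ovtx o) (otime o) (ovtx o, v, t) ->
  gt_ext (d_sigma st v) t -> upd_spec (d_sigma st) sg' v t ->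
  dfs_inv st ->
  dfs_inv (mkDfs sg' ((ovtx o, v, t) :: d_trav st)
             (d_occs st ++ [mkOcc v t (Some (d_cur st, (ovtx o, v, t)))])
             (length (d_occs st))).
Proof.
  intros Hcur [HinE [_ [_ Hle]]] Hgt Hupd [Hwf Hs HR Htr Hstack].
  destruct (lowering_improves _ _ _ _ Hupd Hgt) as [Himp Hv].
  constructor; simpl.
  - apply well_formed_snoc; auto.
  - auto.
  - eapply realized_snoc; eauto.
  - apply trav_bounded_cons with (d_sigma st); auto.
  - intros i oi Hi. destruct (Nat.eq_dec i (length (d_occs st))) as [-> | Hne];
      [left; constructor |].
    rewrite nth_snoc_other in Hi by exact Hne.
    destruct (Hstack i oi Hi) as [Hanc | Hset].
    + left. eapply anc_parent; [apply nth_snoc_last | reflexivity | now apply ancestor_snoc].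
    + right. eapply settled_improves; eauto.
Qed.

Lemma dfs_inv_advance_old st o v t :
  ~ gt_ext (d_sigma st v) t -> dfs_inv st ->
  dfs_inv (mkDfs (d_sigma st) ((ovtx o, v, t) :: d_trav st) (d_occs st) (d_cur st)).
Proof.
  intros Hngt [Hwf Hs HR Htr Hstack]. constructor; simpl; auto.
  apply trav_bounded_cons with (d_sigma st); auto using improves_refl, not_lowering_sigma_le.
Qed.

Lemma dfs_inv_run st st' :
  clos_refl_trans _ (dfs_step E) st st' -> dfs_inv st -> dfs_inv st'.
Proof.
  induction 1 as [st st' Hstep | | ]; auto.
  destruct Hstep; eauto using dfs_inv_back, dfs_inv_advance_new, dfs_inv_advance_old.
Qed.

(* On termination the stack is just the root, which has an empty set A, so
   every occurrence is settled. *)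
Lemma dfs_certificate T :
  dfs_tree E s ts T -> exists sg, foremost_certificate s ts T sg.
Proof.
  intros (st0 & st & Hinit & Hrun & (o & Ho & Hroot & HA) & <-).
  destruct (dfs_inv_run _ _ Hrun (dfs_inv_init _ Hinit)) as [Hwf Hs HR Htr Hstack].
  exists (d_sigma st). constructor; auto.
  apply closed_of_all_settled with (d_occs st); auto.
  intros j oj Hj. destruct (Hstack j oj Hj) as [Hanc | Hset]; auto.
  inversion Hanc as [Hcur_j | k ok p e Hk Hp _ Hk_eq]; subst.
  - rewrite Hj in Ho. injection Ho as ->. now apply dfs_settled_exhausted.
  - rewrite Ho in Hk. injection Hk as <-. congruence.
Qed.

End DFS.

(** ** Temporal BFS *)

Section BFS.
Variables (s : V) (ts : R).

Definition bfs_nodes (st : @bfs_state V) : list (@occ V) := map fst (b_recs st).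

Definition settled_towards (sg : V -> option R) (snap : list (edge V)) (o : @occ V)
    (done : list V) : Prop :=
  forall e, In e E -> ~ In e snap -> esrc e = ovtx o -> otime o <= etime e ->
    In (etgt e) done -> sigma_le sg (etgt e) (etime e).

Lemma settled_towards_cons sg sg' snap o done v t :
  settled_towards sg snap o done -> improves sg sg' -> sigma_le sg' v t ->
  (forall t', in_B E snap (ovtx o) (otime o) (ovtx o, v, t') -> t <= t') ->
  settled_towards sg' snap o (v :: done).
Proof.
  intros Hst Himp Hv Hmin e He Hsnap Hsrc Hle [Hv' | Hdone]; auto.
  destruct e as [[u w] t']. unfold esrc, etgt, etime in *; simpl in *. subst u w.
  apply sigma_le_weaken with t; auto. apply Hmin. repeat split; auto.
Qed.

Lemma settled_of_scanned sg trav snap o done :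
  trav_bounded sg trav -> incl snap trav -> settled_towards sg snap o done ->
  (forall e, in_B E snap (ovtx o) (otime o) e -> In (etgt e) done) -> settled sg o.
Proof.
  intros Htr Hincl Hst Hall e He Hsrc Hle.
  destruct (classic (In e snap)) as [Hin | Hnin]; auto.
  apply Hst; auto. apply Hall. repeat split; auto.
Qed.

(* The BFS invariant, h being the number of records popped so far: the queue
   holds exactly the records from h on, parents are popped records, and the
   popped records are settled except the one being scanned. *)
Record bfs_inv (h : nat) (st : @bfs_state V) : Prop := {
  bfs_queue_range : b_queue st = seq h (length (b_recs st) - h);
  bfs_head_le : (h <= length (b_recs st))%nat;
  bfs_wf : well_formed_tree s ts (bfs_nodes st);
  bfs_parents_popped : forall j o p e, nth_error (bfs_nodes st) j = Some o ->
    oparent o = Some (p, e) -> (p < h)%nat;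
  bfs_source : sigma_le (b_sigma st) s ts;
  bfs_realized : realized (b_sigma st) (bfs_nodes st);
  bfs_trav : trav_bounded (b_sigma st) (b_trav st);
  bfs_popped : forall i o, (i < h)%nat -> nth_error (bfs_nodes st) i = Some o ->
    (exists snap done, b_cur st = Some (i, snap, done)) \/ settled (b_sigma st) o;
  bfs_scanning : forall r snap done, b_cur st = Some (r, snap, done) ->
    (r < h)%nat /\ incl snap (b_trav st) /\
    forall o, nth_error (bfs_nodes st) r = Some o -> settled_towards (b_sigma st) snap o done }.

Lemma bfs_inv_init st : bfs_init s ts st -> bfs_inv 0 st.
Proof.
  intros [[Hs Hother] [Htr [Hrec [Hq Hcur]]]].
  destruct st as [sg tr recs q cur]; unfold bfs_nodes; simpl in *; subst.
  constructor; simpl; try (intros; lia); try discriminate.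
  - reflexivity.
  - intros [| [| i]] o Ho; try discriminate. injection Ho as <-. now left.
  - intros [| [| j]] o p e Ho; try discriminate. injection Ho as <-. discriminate.
  - exists ts. split; auto. lra.
  - intros x a Ha. destruct (classic (x = s)) as [-> | Hne].
    + rewrite Hs in Ha. injection Ha as <-. exists 0%nat, (mkOcc s ts None). auto.
    + rewrite Hother in Ha by exact Hne. discriminate.
  - intros e [].
Qed.

Lemma bfs_inv_pop h st r q :
  b_cur st = None -> b_queue st = r :: q -> bfs_inv h st ->
  bfs_inv (S h) (mkBfs (b_sigma st) (b_trav st) (b_recs st) q (Some (r, b_trav st, []))).
Proof.
  intros Hcur Hq [Hrange Hh Hwf Hpar Hs HR Htr Hpop Hscan].
  rewrite Hq in Hrange.
  destruct (length (b_recs st) - h)%nat as [| m] eqn:Hm; [discriminate |].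
  injection Hrange as -> ->.
  constructor; unfold bfs_nodes in *; simpl; auto.
  - f_equal. lia.
  - lia.
  - intros j o p e Hj Hp. specialize (Hpar j o p e Hj Hp). lia.
  - intros i o Hi Ho. destruct (Nat.eq_dec i h) as [-> | Hne]; [left; eauto |].
    destruct (Hpop i o ltac:(lia) Ho) as [(sn & dn & Hc) | Hset]; [congruence | now right].
  - intros r' snap done Hc. injection Hc as <- <- <-.
    split; [lia | split; [apply incl_refl |]]. intros o Ho e _ _ _ _ [].
Qed.

Lemma bfs_inv_finish h st r snap done o d :
  b_cur st = Some (r, snap, done) -> nth_error (b_recs st) r = Some (o, d) ->
  (forall e, in_B E snap (ovtx o) (otime o) e -> In (etgt e) done) ->
  bfs_inv h st ->
  bfs_inv h (mkBfs (b_sigma st) (b_trav st) (b_recs st) (b_queue st) None).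
Proof.
  intros Hcur Hr Hall [Hrange Hh Hwf Hpar Hs HR Htr Hpop Hscan].
  destruct (Hscan _ _ _ Hcur) as (_ & Hincl & Hst).
  pose proof (map_nth_error fst _ _ Hr) as Hr'.
  constructor; unfold bfs_nodes in *; simpl; auto; [| discriminate].
  intros i oi Hi Hoi. right.
  destruct (Hpop i oi Hi Hoi) as [(sn & dn & Hc) | Hset]; auto.
  rewrite Hcur in Hc. injection Hc as -> _ _. rewrite Hr' in Hoi. injection Hoi as <-.
  eapply settled_of_scanned; eauto.
Qed.

Lemma bfs_inv_create h st r snap done o d v t sg' :
  b_cur st = Some (r, snap, done) -> nth_error (b_recs st) r = Some (o, d) ->
  in_B E snap (ovtx o) (otime o) (ovtx o, v, t) ->
  (forall t', in_B E snap (ovtx o) (otime o) (ovtx o, v, t') -> t <= t') ->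
  gt_ext (b_sigma st v) t -> upd_spec (b_sigma st) sg' v t ->
  bfs_inv h st ->
  bfs_inv h (mkBfs sg' ((ovtx o, v, t) :: b_trav st)
    (b_recs st ++ [(mkOcc v t (Some (r, (ovtx o, v, t))), S d)])
    (b_queue st ++ [length (b_recs st)]) (Some (r, snap, v :: done))).
Proof.
  intros Hcur Hr [HinE [_ [_ Hle]]] Hmin Hgt Hupd [Hrange Hh Hwf Hpar Hs HR Htr Hpop Hscan].
  destruct (lowering_improves _ _ _ _ Hupd Hgt) as [Himp Hv].
  destruct (Hscan _ _ _ Hcur) as (Hrh & Hincl & Hst).
  pose proof (map_nth_error fst _ _ Hr) as Hr'.
  assert (Hlen : length (map fst (b_recs st)) = length (b_recs st)) by apply length_map.
  constructor; unfold bfs_nodes in *; simpl; rewrite ?map_app, ?length_app; simpl.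
  - rewrite Hrange. replace (length (b_recs st) + 1 - h)%nat
      with (S (length (b_recs st) - h)) by lia.
    rewrite seq_S. do 3 f_equal. lia.
  - lia.
  - apply well_formed_snoc; auto.
  - intros j oj p e Hj Hp. destruct (Nat.eq_dec j (length (map fst (b_recs st)))) as [-> | Hne].
    + rewrite nth_snoc_last in Hj. injection Hj as <-. injection Hp as <- _. exact Hrh.
    + rewrite nth_snoc_other in Hj by exact Hne. eauto.
  - auto.
  - eapply realized_snoc; eauto.
  - apply trav_bounded_cons with (b_sigma st); auto.
  - intros i oi Hi Hoi. rewrite nth_snoc_other in Hoi by lia.
    destruct (Hpop i oi Hi Hoi) as [(sn & dn & Hc) | Hset].
    + left. rewrite Hcur in Hc. injection Hc as -> _ _. eauto.
    + right. eapply settled_improves; eauto.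
  - intros r' snap' done' Hc. injection Hc as <- <- <-.
    split; [exact Hrh | split; [now apply incl_tl |]].
    intros o' Ho'. rewrite (nth_snoc_old _ _ _ _ Hr') in Ho'. injection Ho' as <-.
    eapply settled_towards_cons; eauto.
Qed.

(* Case (ii): the queued record i of v at the next level is overwritten. It has
   not been popped, so no node has it as parent. *)
Lemma bfs_inv_update h st r snap done o d v t sg' i :
  b_cur st = Some (r, snap, done) -> nth_error (b_recs st) r = Some (o, d) ->
  in_B E snap (ovtx o) (otime o) (ovtx o, v, t) ->
  (forall t', in_B E snap (ovtx o) (otime o) (ovtx o, v, t') -> t <= t') ->
  gt_ext (b_sigma st v) t -> inQ_lvl st v (S d) i -> upd_spec (b_sigma st) sg' v t ->
  bfs_inv h st ->
  bfs_inv h (mkBfs sg' ((ovtx o, v, t) :: b_trav st)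
    (set_nth_list (b_recs st) i (mkOcc v t (Some (r, (ovtx o, v, t))), S d))
    (b_queue st) (Some (r, snap, v :: done))).
Proof.
  intros Hcur Hr [HinE [_ [_ Hle]]] Hmin Hgt [Hiq (oi & Hoi & Hoiv)] Hupd
    [Hrange Hh Hwf Hpar Hs HR Htr Hpop Hscan].
  destruct (lowering_improves _ _ _ _ Hupd Hgt) as [Himp Hv].
  destruct (Hscan _ _ _ Hcur) as (Hrh & Hincl & Hst).
  pose proof (map_nth_error fst _ _ Hr) as Hr'.
  pose proof (map_nth_error fst _ _ Hoi) as Hoi'. simpl in Hr', Hoi'.
  assert (Hil : (i < length (b_recs st))%nat) by (apply nth_error_Some; congruence).
  assert (Hhi : (h <= i)%nat) by (rewrite Hrange, in_seq in Hiq; lia).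
  assert (Hil' : (i < length (map fst (b_recs st)))%nat) by now rewrite length_map.
  set (x := mkOcc v t (Some (r, (ovtx o, v, t)))).
  pose proof (nth_set_nth_list_same (map fst (b_recs st)) i x Hil') as Hnew.
  pose proof (fun j => nth_set_nth_list_other (map fst (b_recs st)) i x j Hil') as Hsame.
  constructor; unfold bfs_nodes in *; simpl;
    rewrite ?length_set_nth_list, ?map_set_nth_list by exact Hil; simpl.
  - exact Hrange.
  - exact Hh.
  - eapply well_formed_replace; eauto; [| lia].
    intros j oj q e Hj Hq. specialize (Hpar j oj q e Hj Hq). lia.
  - intros j oj p e Hj Hp. destruct (Nat.eq_dec j i) as [-> | Hne].
    + rewrite Hnew in Hj. injection Hj as <-. injection Hp as <- _. exact Hrh.
    + rewrite Hsame in Hj by exact Hne. eauto.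
  - auto.
  - eapply realized_replace; eauto. intros ok Hok. congruence.
  - apply trav_bounded_cons with (b_sigma st); auto.
  - intros i' oi' Hi' Hoi''. rewrite Hsame in Hoi'' by lia.
    destruct (Hpop i' oi' Hi' Hoi'') as [(sn & dn & Hc) | Hset].
    + left. rewrite Hcur in Hc. injection Hc as -> _ _. eauto.
    + right. eapply settled_improves; eauto.
  - intros r' snap' done' Hc. injection Hc as <- <- <-.
    split; [exact Hrh | split; [now apply incl_tl |]].
    intros o' Ho'. rewrite Hsame, Hr' in Ho' by lia. injection Ho' as <-.
    eapply settled_towards_cons; eauto.
Qed.

Lemma bfs_inv_skip h st r snap done o d v t :
  b_cur st = Some (r, snap, done) -> nth_error (b_recs st) r = Some (o, d) ->
  (forall t', in_B E snap (ovtx o) (otime o) (ovtx o, v, t') -> t <= t') ->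
  ~ gt_ext (b_sigma st v) t -> bfs_inv h st ->
  bfs_inv h (mkBfs (b_sigma st) ((ovtx o, v, t) :: b_trav st) (b_recs st)
    (b_queue st) (Some (r, snap, v :: done))).
Proof.
  intros Hcur Hr Hmin Hngt [Hrange Hh Hwf Hpar Hs HR Htr Hpop Hscan].
  pose proof (not_lowering_sigma_le _ _ _ Hngt) as Hv.
  destruct (Hscan _ _ _ Hcur) as (Hrh & Hincl & Hst).
  pose proof (map_nth_error fst _ _ Hr) as Hr'.
  constructor; unfold bfs_nodes in *; simpl; auto.
  - apply trav_bounded_cons with (b_sigma st); auto using improves_refl.
  - intros i oi Hi Hoi. destruct (Hpop i oi Hi Hoi) as [(sn & dn & Hc) | Hset]; auto.
    left. rewrite Hcur in Hc. injection Hc as -> _ _. eauto.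
  - intros r' snap' done' Hc. injection Hc as <- <- <-.
    split; [exact Hrh | split; [now apply incl_tl |]].
    intros o' Ho'. rewrite Hr' in Ho'. injection Ho' as <-.
    eapply settled_towards_cons; eauto using improves_refl.
Qed.

Lemma bfs_inv_run st st' :
  clos_refl_trans _ (bfs_step E) st st' -> forall h, bfs_inv h st -> exists h', bfs_inv h' st'.
Proof.
  induction 1 as [st st' Hstep | st | st st' st'' _ IH1 _ IH2]; intros h Hinv; eauto.
  - destruct Hstep; eauto using bfs_inv_pop, bfs_inv_finish, bfs_inv_create,
      bfs_inv_update, bfs_inv_skip.
  - destruct (IH1 h Hinv) as [h' Hinv']. eauto.
Qed.

(* On termination the queue is empty and no scan is running, so every record
   has been popped and settled. *)
Lemma bfs_certificate T :
  bfs_tree E s ts T -> exists sg, foremost_certificate s ts T sg.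
Proof.
  intros (st0 & st & Hinit & Hrun & [Hq Hcur] & <-).
  destruct (bfs_inv_run _ _ Hrun 0 (bfs_inv_init _ Hinit))
    as (h & [Hrange Hh Hwf _ Hs HR _ Hpop _]).
  rewrite Hq in Hrange.
  exists (b_sigma st). constructor; auto.
  apply closed_of_all_settled with (bfs_nodes st); auto.
  intros j o Hj.
  assert (Hjl : (j < length (bfs_nodes st))%nat) by (apply nth_error_Some; congruence).
  unfold bfs_nodes in Hjl. rewrite length_map in Hjl.
  destruct (length (b_recs st) - h)%nat eqn:Hm; [| discriminate].
  destruct (Hpop j o ltac:(lia) Hj) as [(sn & dn & Hc) | Hset]; [congruence | exact Hset].
Qed.

End BFS.
End ForemostTrees.

Theorem mainTheorem8 (V : Type) (HV : exists l : list V, forall x, In x l)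
  (E : list (edge V)) (HE : temporal_graph E) (s : V) (ts : R)
  (T : list (@occ V)) (HT : dfs_tree E s ts T \/ bfs_tree E s ts T)
  (v : V) (Hv : v <> s) :
  (forall i o, nth_error T i = Some o -> ovtx o = v ->
     (forall j o', nth_error T j = Some o' -> ovtx o' = v -> otime o <= otime o') ->
     (exists P, root_path T i P) /\
     (forall P, root_path T i P -> foremost_path E s v ts P))
  /\
  ((forall i o, nth_error T i = Some o -> ovtx o <> v) ->
     forall P, ~ temporal_path E s v ts P).
Proof.
  assert (Hcert : exists sg, foremost_certificate E s ts T sg)
    by (destruct HT; [apply dfs_certificate | apply bfs_certificate]; assumption).
  destruct Hcert as [sg Hcert]. split.
  - exact (certificate_minimal_occurrence E s ts T sg v Hcert Hv).
  - exact (certificate_no_occurrence E s ts T sg v Hcert).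
Qed.
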